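(* Let $G$ be the linear quadratic output (LQO) system $\dot x(t)=Ax(t)+Bu(t)$, $y(t)=Cx(t)+\big[x(t)^TM_1x(t),\dots,x(t)^TM_px(t)\big]^T$, with $A\in\mathbb{R}^{n\times n}$ Hurwitz, $B\in\mathbb{R}^{n\times m}$, $C\in\mathbb{R}^{p\times n}$ and symmetric $M_i\in\mathbb{R}^{n\times n}$, and let $\omega>0$. Then $$\|G\|_{\mathcal{H}_{2,\omega}}=\sqrt{\operatorname{trace}(B^TQ_\omega B)},$$ where $Q_\omega$ is the frequency-limited observability Gramian defined in the context.
   Context: The transfer functions of $G$ are $G_1(s)=C(sI-A)^{-1}B$ and $G_{2,i}(s_1,s_2)=B^T(s_1I-A)^{-*}M_i(s_2I-A)^{-1}B$ for $i=1,\dots,p$, where ${}^*$ denotes conjugate transpose and $(\cdot)^{-*}=((\cdot)^{-1})^*$. The frequency-limited $\mathcal{H}_2$ norm on $[0,\omega]$ rad/sec is $$\|G\|_{\mathcal{H}_{2,\omega}}=\Big[\operatorname{trace}\Big(\frac{1}{2\pi}\int_{-\omega}^{\omega}G_1^*(j\nu)G_1(j\nu)\,d\nu+\frac{1}{(2\pi)^2}\int_{-\omega}^{\omega}\int_{-\omega}^{\omega}\sum_{i=1}^pG_{2,i}^*(j\nu_1,j\nu_2)G_{2,i}(j\nu_1,j\nu_2)\,d\nu_1d\nu_2\Big)\Big]^{1/2}.$$ The frequency-limited Gramians are $P_\omega=\frac{1}{2\pi}\int_{-\omega}^{\omega}(j\nu I-A)^{-1}BB^T(j\nu I-A)^{-*}d\nu$,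 $Y_\omega=\frac{1}{2\pi}\int_{-\omega}^{\omega}(j\nu I-A)^{-*}C^TC(j\nu I-A)^{-1}d\nu$, $Z_\omega=\frac{1}{2\pi}\int_{-\omega}^{\omega}(j\nu I-A)^{-*}\big(\sum_{i=1}^pM_iP_\omega M_i\big)(j\nu I-A)^{-1}d\nu$, and $Q_\omega=Y_\omega+Z_\omega$. *)

From HB Require Import structures.
From mathcomp Require Import all_boot all_order all_algebra.
From mathcomp Require Import all_classical all_reals all_analysis.
From mathcomp Require Import complex.
Set Implicit Arguments. Unset Strict Implicit. Unset Printing Implicit Defensive.
Import Order.TTheory GRing.Theory Num.Theory.
Local Open Scope ring_scope.

Section LQO.
Variable R : realType.
Local Notation CC := (R[i]).

Definition toCmx (r c : nat) (X : 'M[R]_(r, c)) : 'M[CC]_(r, c) :=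
  map_mx (real_complex R) X.

Definition cadj (r c : nat) (X : 'M[CC]_(r, c)) : 'M[CC]_(c, r) :=
  (map_mx (@conjc R) X)^T.

Definition jw (nu : R) : CC := Complex 0 nu.

Definition resolv (n : nat) (A : 'M[R]_n) (s : CC) : 'M[CC]_n :=
  invmx (s%:M - toCmx A).

Definition hurwitz (n : nat) (A : 'M[R]_n) : Prop :=
  forall l : CC, eigenvalue (toCmx A) l -> @complex.Re R l < 0.

Definition cint (w : R) (f : R -> CC) : CC :=
  Complex (Rintegral (@lebesgue_measure R) `[- w, w]%classic (fun x => @complex.Re R (f x)))
          (Rintegral (@lebesgue_measure R) `[- w, w]%classic (fun x => @complex.Im R (f x))).

Definition cmx_int (r c : nat) (w : R) (F : R -> 'M[CC]_(r, c)) : 'M[CC]_(r, c) :=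
  \matrix_(i, j) cint w (fun x => F x i j).

Definition inv2pi : CC := real_complex R (2 * pi)^-1.

Variables (n m p : nat) (A : 'M[R]_n) (B : 'M[R]_(n, m)) (C : 'M[R]_(p, n))
  (M : 'I_p -> 'M[R]_n).

Definition G1 (s : CC) : 'M[CC]_(p, m) :=
  toCmx C *m resolv A s *m toCmx B.

Definition G2 (i : 'I_p) (s1 s2 : CC) : 'M[CC]_m :=
  toCmx B^T *m cadj (resolv A s1) *m toCmx (M i) *m resolv A s2 *m toCmx B.

Definition H2w_norm (w : R) : CC :=
  sqrtC (\tr (
    inv2pi *: cmx_int w (fun nu => cadj (G1 (jw nu)) *m G1 (jw nu))
  + (inv2pi ^+ 2) *: cmx_int w (fun nu2 => cmx_int w (fun nu1 =>
        \sum_(i < p) cadj (G2 i (jw nu1) (jw nu2)) *m G2 i (jw nu1) (jw nu2))))).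

Definition Pw (w : R) : 'M[CC]_n :=
  inv2pi *: cmx_int w (fun nu =>
    resolv A (jw nu) *m toCmx (B *m B^T) *m cadj (resolv A (jw nu))).

Definition Yw (w : R) : 'M[CC]_n :=
  inv2pi *: cmx_int w (fun nu =>
    cadj (resolv A (jw nu)) *m toCmx (C^T *m C) *m resolv A (jw nu)).

Definition Zw (w : R) : 'M[CC]_n :=
  inv2pi *: cmx_int w (fun nu =>
    cadj (resolv A (jw nu)) *m (\sum_(i < p) toCmx (M i) *m Pw w *m toCmx (M i))
      *m resolv A (jw nu)).

Definition Qw (w : R) : 'M[CC]_n := Yw w + Zw w.

End LQO.

From HB Require Import structures.
From mathcomp Require Import all_boot all_order all_algebra.
From mathcomp Require Import all_classical all_reals all_analysis.
From mathcomp Require Import complex.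
Import Order.TTheory GRing.Theory Num.Theory.
Import numFieldNormedType.Exports.
Local Open Scope ring_scope.
Set Implicit Arguments. Unset Strict Implicit.

(* Both integrands are B^T (...) B sandwiches.  G_1^* G_1 is B^T times the
   integrand of Y_w times B.  In G_{2,i}^* G_{2,i} the factors depending on nu_1
   form (j nu_1 I - A)^{-1} B B^T (j nu_1 I - A)^{-*}, whose integral is 2 pi P_w,
   and what remains of the nu_2 integral is the one defining Z_w.  So the identity
   is linearity of the entrywise integral.  The Lebesgue integral is linear only on
   integrable functions; here every entry is continuous in nu, because A is Hurwitz
   and so j nu is never an eigenvalue of A. *)

Section ComplexContinuity.
Variable R : realType.
Local Notation Re := (@complex.Re R).
Local Notation Im := (@complex.Im R).

Definition cplx_continuous (f : R -> R[i]) :=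
  continuous (fun x => Re (f x)) /\ continuous (fun x => Im (f x)).

Lemma ReD (x y : R[i]) : Re (x + y) = Re x + Re y. Proof. by case: x; case: y. Qed.
Lemma ImD (x y : R[i]) : Im (x + y) = Im x + Im y. Proof. by case: x; case: y. Qed.
Lemma ReM (x y : R[i]) : Re (x * y) = Re x * Re y - Im x * Im y.
Proof. by case: x; case: y. Qed.
Lemma ImM (x y : R[i]) : Im (x * y) = Re x * Im y + Im x * Re y.
Proof. by case: x => a b; case: y => c d /=; rewrite addrC. Qed.

Lemma cplx_continuous_cst (c : R[i]) : cplx_continuous (fun _ => c).
Proof. by split; apply: cst_continuous. Qed.

Lemma cplx_continuous_jw : cplx_continuous (@jw R).
Proof. by split; [apply: cst_continuous | move=> x; apply: cvg_id]. Qed.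

Lemma cplx_continuousD f g : cplx_continuous f -> cplx_continuous g ->
  cplx_continuous (fun x => f x + g x).
Proof.
move=> [fRe fIm] [gRe gIm]; split.
- by under eq_fun do rewrite ReD; move=> x; exact: continuousD (fRe x) (gRe x).
- by under eq_fun do rewrite ImD; move=> x; exact: continuousD (fIm x) (gIm x).
Qed.

Lemma cplx_continuousM f g : cplx_continuous f -> cplx_continuous g ->
  cplx_continuous (fun x => f x * g x).
Proof.
move=> [fRe fIm] [gRe gIm]; split.
- under eq_fun do rewrite ReM; move=> x.
  exact: continuousB (continuousM (fRe x) (gRe x)) (continuousM (fIm x) (gIm x)).
- under eq_fun do rewrite ImM; move=> x.
  exact: continuousD (continuousM (fRe x) (gIm x)) (continuousM (fIm x) (gRe x)).
Qed.

Lemma cplx_continuousV f : (forall x, f x != 0) -> cplx_continuous f ->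
  cplx_continuous (fun x => (f x)^-1).
Proof.
move=> f_neq0 [fRe fIm].
pose norm2 x := Re (f x) ^+ 2 + Im (f x) ^+ 2.
have norm2_neq0 x : norm2 x != 0.
  rewrite /norm2; case: (f x) (f_neq0 x) => a b; apply: contra => /=.
  by rewrite paddr_eq0 ?sqr_ge0 // !sqrf_eq0 => /andP[/eqP-> /eqP->].
have norm2_cont : continuous norm2.
  move=> x.
  exact: continuousD (continuousM (fRe x) (fRe x)) (continuousM (fIm x) (fIm x)).
have norm2V_cont : continuous (fun x => (norm2 x)^-1).
  by move=> x; exact: continuousV (norm2_neq0 x) (norm2_cont x).
split.
- have -> : (fun x => Re (f x)^-1) = (fun x => Re (f x) * (norm2 x)^-1).
    by apply/funext => x; rewrite /norm2; case: (f x).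
  by move=> x; exact: continuousM (fRe x) (norm2V_cont x).
- have -> : (fun x => Im (f x)^-1) = (fun x => - (Im (f x) * (norm2 x)^-1)).
    by apply/funext => x; rewrite /norm2; case: (f x).
  by move=> x; exact: continuousN (continuousM (fIm x) (norm2V_cont x)).
Qed.

Lemma cplx_continuousJ f : cplx_continuous f -> cplx_continuous (fun x => conjc (f x)).
Proof.
move=> [fRe fIm]; split.
- have -> : (fun x => Re (conjc (f x))) = (fun x => Re (f x)).
    by apply/funext => x; case: (f x).
  exact: fRe.
- have -> : (fun x => Im (conjc (f x))) = (fun x => - Im (f x)).
    by apply/funext => x; case: (f x).
  by move=> x; exact: continuousN (fIm x).
Qed.

Lemma cplx_continuous_sum (I : Type) (s : seq I) (P : pred I) (F : I -> R -> R[i]) :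
  (forall j, cplx_continuous (F j)) ->
  cplx_continuous (fun x => \sum_(j <- s | P j) F j x).
Proof.
move=> F_cont; elim: s => [|a s IHs].
  by under eq_fun do rewrite big_nil; apply: cplx_continuous_cst.
under eq_fun do rewrite big_cons.
by case: (P a) => //; apply: cplx_continuousD.
Qed.

Lemma cplx_continuous_prod (I : Type) (s : seq I) (P : pred I) (F : I -> R -> R[i]) :
  (forall j, cplx_continuous (F j)) ->
  cplx_continuous (fun x => \prod_(j <- s | P j) F j x).
Proof.
move=> F_cont; elim: s => [|a s IHs].
  by under eq_fun do rewrite big_nil; apply: cplx_continuous_cst.
under eq_fun do rewrite big_cons.
by case: (P a) => //; apply: cplx_continuousM.
Qed.

End ComplexContinuity.

Section ComplexIntegral.
Variables (R : realType) (w : R).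
Local Notation Re := (@complex.Re R).
Local Notation Im := (@complex.Im R).
Local Notation mu := (@lebesgue_measure R).

Lemma integrable_itv_continuous (g : R -> R) :
  continuous g -> mu.-integrable `[-w, w]%classic (EFin \o g).
Proof.
move=> g_cont; apply: continuous_compact_integrable; first exact: segment_compact.
exact: continuous_subspaceT.
Qed.

Lemma cintD f g : cplx_continuous f -> cplx_continuous g ->
  cint w (fun x => f x + g x) = cint w f + cint w g.
Proof.
move=> [fRe fIm] [gRe gIm]; rewrite /cint.
under [X in Complex (Rintegral _ _ X) _]eq_fun do rewrite ReD.
under [X in Complex _ (Rintegral _ _ X)]eq_fun do rewrite ImD.
by rewrite !RintegralD //; apply: integrable_itv_continuous.
Qed.

Lemma cintMl (c : R[i]) f : cplx_continuous f ->
  cint w (fun x => c * f x) = c * cint w f.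
Proof.
move=> [fRe fIm]; rewrite /cint.
under [X in Complex (Rintegral _ _ X) _]eq_fun do rewrite ReM.
under [X in Complex _ (Rintegral _ _ X)]eq_fun do rewrite ImM.
have cst_cont (a : R) : continuous (fun _ : R => a) by apply: cst_continuous.
have prod_int (a : R) h : continuous h ->
    mu.-integrable `[-w, w]%classic (EFin \o (fun x => a * h x)).
  move=> h_cont; apply: integrable_itv_continuous => x.
  exact: continuousM (cst_cont a x) (h_cont x).
rewrite RintegralB ?RintegralD ?prod_int //.
rewrite !RintegralZl ?integrable_itv_continuous //.
by case: c => a b /=; congr Complex; rewrite addrC.
Qed.

Lemma cint0 : cint w (fun _ => 0) = 0.
Proof. by rewrite /cint /= Rintegral_cst ?mul0r. Qed.

Lemma cint_sum (I : Type) (s : seq I) (F : I -> R -> R[i]) :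
  (forall j, cplx_continuous (F j)) ->
  cint w (fun x => \sum_(j <- s) F j x) = \sum_(j <- s) cint w (F j).
Proof.
move=> F_cont; elim: s => [|a s IHs].
  by under eq_fun do rewrite big_nil; rewrite big_nil cint0.
under eq_fun do rewrite big_cons.
by rewrite big_cons cintD ?IHs //; apply: cplx_continuous_sum.
Qed.

End ComplexIntegral.

Section MatrixFunctions.
Variable R : realType.
Local Notation CC := (R[i]).

Definition mx_continuous r c (F : R -> 'M[CC]_(r, c)) :=
  forall i j, cplx_continuous (fun x => F x i j).

Lemma mx_continuous_cst r c (X : 'M[CC]_(r, c)) : mx_continuous (fun _ => X).
Proof. by move=> i j; apply: cplx_continuous_cst. Qed.

Lemma mx_continuousM r k c (F : R -> 'M[CC]_(r, k)) (G : R -> 'M[CC]_(k, c)) :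
  mx_continuous F -> mx_continuous G -> mx_continuous (fun x => F x *m G x).
Proof.
move=> F_cont G_cont i j; under eq_fun do rewrite mxE.
by apply: cplx_continuous_sum => l; apply: cplx_continuousM.
Qed.

Lemma mx_continuous_cadj r c (F : R -> 'M[CC]_(r, c)) :
  mx_continuous F -> mx_continuous (fun x => cadj (F x)).
Proof.
move=> F_cont i j; under eq_fun do rewrite !mxE.
exact: cplx_continuousJ.
Qed.

Lemma mx_continuous_det k (F : R -> 'M[CC]_k) :
  mx_continuous F -> cplx_continuous (fun x => \det (F x)).
Proof.
move=> F_cont; apply: cplx_continuous_sum => s.
apply: cplx_continuousM; first exact: cplx_continuous_cst.
exact: cplx_continuous_prod.
Qed.

Lemma mx_continuous_invmx k (F : R -> 'M[CC]_k) :
  (forall x, F x \in unitmx) -> mx_continuous F ->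
  mx_continuous (fun x => invmx (F x)).
Proof.
move=> F_unit F_cont i j.
under eq_fun => x do rewrite /invmx F_unit !mxE /cofactor.
apply: cplx_continuousM.
  apply: cplx_continuousV; last exact: mx_continuous_det.
  by move=> x; rewrite -unitfE -unitmxE.
apply: cplx_continuousM; first exact: cplx_continuous_cst.
by apply: mx_continuous_det => a b; under eq_fun do rewrite !mxE.
Qed.

Variable w : R.

Lemma cmx_int_sum_mulmx (I : finType) r c r' c' (X : I -> 'M[CC]_(r', r))
    (Y : I -> 'M[CC]_(c, c')) (F : R -> 'M[CC]_(r, c)) : mx_continuous F ->
  cmx_int w (fun x => \sum_i X i *m F x *m Y i) = \sum_i X i *m cmx_int w F *m Y i.
Proof.
move=> F_cont; apply/matrixP => k l; rewrite mxE summxE.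
have entry_cont i b a : cplx_continuous (fun x => X i k a * Y i b l * F x a b).
  by apply: cplx_continuousM; [exact: cplx_continuous_cst | exact: F_cont].
have -> : (fun x => (\sum_i X i *m F x *m Y i) k l) =
          (fun x => \sum_i \sum_b \sum_a X i k a * Y i b l * F x a b).
  apply/funext => x; rewrite summxE; apply: eq_bigr => i _; rewrite mxE.
  apply: eq_bigr => b _; rewrite mxE mulr_suml; apply: eq_bigr => a _.
  by rewrite mulrAC.
rewrite cint_sum; last by move=> i; do 2 apply: cplx_continuous_sum => ?.
apply: eq_bigr => i _; rewrite mxE.
rewrite cint_sum; last by move=> b; apply: cplx_continuous_sum.
apply: eq_bigr => b _; rewrite mxE mulr_suml cint_sum //.
apply: eq_bigr => a _; rewrite cintMl; last exact: F_cont.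
by rewrite mxE mulrAC.
Qed.

Lemma cmx_int_mulmx r c r' c' (X : 'M[CC]_(r', r)) (Y : 'M[CC]_(c, c'))
    (F : R -> 'M[CC]_(r, c)) : mx_continuous F ->
  cmx_int w (fun x => X *m F x *m Y) = X *m cmx_int w F *m Y.
Proof.
move=> F_cont; have := cmx_int_sum_mulmx (fun _ : 'I_1 => X) (fun _ => Y) F_cont.
by rewrite big_ord1; under eq_fun do rewrite big_ord1.
Qed.

Lemma cmx_intZ r c (a : CC) (F : R -> 'M[CC]_(r, c)) : mx_continuous F ->
  cmx_int w (fun x => a *: F x) = a *: cmx_int w F.
Proof.
move=> F_cont; rewrite -mul_scalar_mx -[RHS]mulmx1 -cmx_int_mulmx //.
by congr cmx_int; apply/funext => x; rewrite mul_scalar_mx mulmx1.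
Qed.

End MatrixFunctions.

Section Resolvent.
Variables (R : realType) (n : nat) (A : 'M[R]_n).
Hypothesis A_hurwitz : hurwitz A.

Lemma resolvent_unitmx (s : R[i]) : 0 <= complex.Re s -> s%:M - toCmx A \in unitmx.
Proof.
move=> Re_s_ge0; rewrite unitmxE unitfE; apply/negP => /det0P [v v_neq0].
rewrite mulmxBr mul_mx_scalar => /eqP; rewrite subr_eq0 => /eqP v_eigen.
have /A_hurwitz : eigenvalue (toCmx A) s by apply/eigenvalueP; exists v.
by rewrite ltNge Re_s_ge0.
Qed.

Lemma mx_continuous_resolvent_jw : mx_continuous (fun x => resolv A (jw x)).
Proof.
apply: mx_continuous_invmx => [x|i j]; first exact: resolvent_unitmx.
under eq_fun do rewrite !mxE.
apply: cplx_continuousD; last exact: cplx_continuous_cst.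
case: (i == j); under eq_fun do rewrite ?mulr1n ?mulr0n.
- exact: cplx_continuous_jw.
- exact: cplx_continuous_cst.
Qed.

End Resolvent.

Section Adjoint.
Variable R : realType.
Local Notation CC := (R[i]).

Lemma cadjM a b c (X : 'M[CC]_(a, b)) (Y : 'M[CC]_(b, c)) :
  cadj (X *m Y) = cadj Y *m cadj X.
Proof. by rewrite /cadj map_mxM trmx_mul. Qed.

Lemma cadjK a b (X : 'M[CC]_(a, b)) : cadj (cadj X) = X.
Proof. by apply/matrixP => i j; rewrite !mxE conjcK. Qed.

Lemma cadj_toCmx a b (X : 'M[R]_(a, b)) : cadj (toCmx X) = toCmx X^T.
Proof. by apply/matrixP => i j; rewrite !mxE conjc_real. Qed.

Lemma toCmxM a b c (X : 'M[R]_(a, b)) (Y : 'M[R]_(b, c)) :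
  toCmx (X *m Y) = toCmx X *m toCmx Y.
Proof. exact: map_mxM. Qed.

End Adjoint.

Section LQOGramians.
Variables (R : realType) (n m p : nat) (A : 'M[R]_n) (B : 'M[R]_(n, m))
  (C : 'M[R]_(p, n)) (M : 'I_p -> 'M[R]_n) (w : R).
Hypothesis A_hurwitz : hurwitz A.
Hypothesis M_sym : forall i, (M i)^T = M i.
Local Notation CC := (R[i]).
Local Notation Rj x := (resolv A (jw x)).

Let Rj_cont := mx_continuous_resolvent_jw A_hurwitz.

Lemma mx_continuous_resolvent_adj_sandwich (X : 'M[CC]_n) :
  mx_continuous (fun x => cadj (Rj x) *m X *m Rj x).
Proof.
apply: mx_continuousM Rj_cont.
exact: mx_continuousM (mx_continuous_cadj Rj_cont) (mx_continuous_cst X).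
Qed.

Lemma cmx_int_G1_gram :
  inv2pi R *: cmx_int w (fun nu => cadj (G1 A B C (jw nu)) *m G1 A B C (jw nu)) =
  toCmx B^T *m Yw A C w *m toCmx B.
Proof.
rewrite /Yw -scalemxAr -scalemxAl -cmx_int_mulmx;
  last exact: mx_continuous_resolvent_adj_sandwich.
congr (_ *: _); congr cmx_int; apply/funext => nu.
by rewrite /G1 !cadjM !cadj_toCmx !toCmxM !mulmxA.
Qed.

Let K := cmx_int w (fun x => Rj x *m toCmx (B *m B^T) *m cadj (Rj x)).

Lemma cmx_int_G2_gram_inner y :
  cmx_int w (fun x =>
      \sum_i cadj (G2 A B M i (jw x) (jw y)) *m G2 A B M i (jw x) (jw y)) =
  toCmx B^T *m cadj (Rj y) *m (\sum_i toCmx (M i) *m K *m toCmx (M i))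
    *m Rj y *m toCmx B.
Proof.
transitivity (\sum_i (toCmx B^T *m cadj (Rj y) *m toCmx (M i)) *m K *m
                     (toCmx (M i) *m Rj y *m toCmx B)); last first.
  by rewrite mulmx_sumr !mulmx_suml; apply: eq_bigr => i _; rewrite !mulmxA.
rewrite /K -cmx_int_sum_mulmx; last first.
  exact: mx_continuousM (mx_continuousM Rj_cont (mx_continuous_cst _))
                        (mx_continuous_cadj Rj_cont).
congr cmx_int; apply/funext => x; apply: eq_bigr => i _.
by rewrite /G2 !cadjM !cadj_toCmx cadjK trmxK M_sym !toCmxM !mulmxA.
Qed.

Lemma cmx_int_G2_gram :
  inv2pi R ^+ 2 *: cmx_int w (fun y => cmx_int w (fun x =>
      \sum_i cadj (G2 A B M i (jw x) (jw y)) *m G2 A B M i (jw x) (jw y))) =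
  toCmx B^T *m Zw A B M w *m toCmx B.
Proof.
set S := \sum_i toCmx (M i) *m K *m toCmx (M i).
have Pw_sandwich : \sum_i toCmx (M i) *m Pw A B w *m toCmx (M i) = inv2pi R *: S.
  by rewrite scaler_sumr; apply: eq_bigr => i _; rewrite -scalemxAr -scalemxAl.
under eq_fun do rewrite cmx_int_G2_gram_inner -/S.
rewrite /Zw Pw_sandwich.
under [in RHS]eq_fun do rewrite -scalemxAr -scalemxAl.
rewrite cmx_intZ; last exact: mx_continuous_resolvent_adj_sandwich.
rewrite scalerA -expr2 -scalemxAr -scalemxAl -cmx_int_mulmx;
  last exact: mx_continuous_resolvent_adj_sandwich.
by congr (_ *: cmx_int _ _); apply/funext => y; rewrite !mulmxA.
Qed.

End LQOGramians.

Theorem proposition1 (R : realType) (n m p : nat) (A : 'M[R]_n)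
  (B : 'M[R]_(n, m)) (C : 'M[R]_(p, n)) (M : 'I_p -> 'M[R]_n) (w : R) :
  hurwitz A ->
  (forall i, (M i)^T = M i) ->
  0 < w ->
  H2w_norm A B C M w = sqrtC (\tr (toCmx B^T *m Qw A B C M w *m toCmx B)).
Proof.
(* The identity holds for every [w]. *)
move=> A_hurwitz M_sym _.
rewrite /H2w_norm (cmx_int_G1_gram B C w A_hurwitz).
rewrite (cmx_int_G2_gram B w A_hurwitz M_sym).
by rewrite /Qw mulmxDr mulmxDl.
Qed.
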